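(* Let $S$ be a $\Gamma$-hemiring, let $\mu$ be a prime fuzzy h-ideal of $S$ and let $x\in S$. Then for all $y\in S$, $\langle x,\mu\rangle(y)=\inf_{s_1\in S,\ \eta,\delta\in\Gamma}\langle x\eta s_1\delta x,\mu\rangle(y)$.
   Context: A $\Gamma$-hemiring is a pair of additive commutative semigroups with zero $S$ and $\Gamma$ with a map $S\times\Gamma\times S\to S$, $(a,\alpha,b)\mapsto a\alpha b$, such that for all $a,b,c\in S$, $\alpha,\beta\in\Gamma$: $(a+b)\alpha c=a\alpha c+b\alpha c$; $a\alpha(b+c)=a\alpha b+a\alpha c$; $a(\alpha+\beta)b=a\alpha b+a\beta b$; $a\alpha(b\beta c)=(a\alpha b)\beta c$; $0\alpha a=0=a\alpha0$; $a0b=0=b0a$. A fuzzy h-ideal of $S$ is a map $\mu:S\to[0,1]$, not identically $0$, such that for all $x,y,a,b,z\in S$, $\gamma\in\Gamma$: $\mu(x+y)\ge\min\{\mu(x),\mu(y)\}$; $\mu(x\gamma y)\ge\mu(x)$ and $\mu(x\gamma y)\ge\mu(y)$; $x+a+z=b+z$ implies $\mu(x)\ge\min\{\mu(a),\mu(b)\}$. For fuzzy subsets $\sigma,\theta$, the h-product is $(\sigma\Gamma_h\theta)(x)=\sup\min\{\sigma(a_1),\sigma(a_2),\theta(b_1),\theta(b_2)\}$, the supremum over all $z,a_1,a_2,b_1,b_2\in S$, $\gamma,\delta\in\Gamma$ with $x+a_1\gamma b_1+z=a_2\delta b_2+z$, and $0$ if no such expression exists. Inclusion means pointwise $\le$.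 A fuzzy h-ideal $\mu$ is prime if it is not constant and for any fuzzy h-ideals $\sigma,\theta$, $\sigma\Gamma_h\theta\subseteq\mu$ implies $\sigma\subseteq\mu$ or $\theta\subseteq\mu$. The extension of $\mu$ by $x$ is $\langle x,\mu\rangle(y)=\inf_{s\in S,\ \alpha,\gamma\in\Gamma}\mu(x\alpha s\gamma y)$. *)

From HB Require Import structures.
From mathcomp Require Import all_boot all_order all_algebra.
From mathcomp Require Import boolp classical_sets reals Rstruct.
Set Implicit Arguments. Unset Strict Implicit. Unset Printing Implicit Defensive.
Import Order.TTheory GRing.Theory Num.Theory.
Local Open Scope classical_set_scope.
Local Open Scope ring_scope.

Record GammaHemiring := {
  carS : Type;
  carG : Type;
  addS : carS -> carS -> carS;
  zeroS : carS;
  addG : carG -> carG -> carG;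
  zeroG : carG;
  gop : carS -> carG -> carS -> carS;
  addSA : forall a b c, addS a (addS b c) = addS (addS a b) c;
  addSC : forall a b, addS a b = addS b a;
  add0S : forall a, addS zeroS a = a;
  addGA : forall a b c, addG a (addG b c) = addG (addG a b) c;
  addGC : forall a b, addG a b = addG b a;
  add0G : forall a, addG zeroG a = a;
  gopDl : forall a b c al, gop (addS a b) al c = addS (gop a al c) (gop b al c);
  gopDr : forall a b c al, gop a al (addS b c) = addS (gop a al b) (gop a al c);
  gopDm : forall a b al be, gop a (addG al be) b = addS (gop a al b) (gop a be b);
  gopA : forall a b c al be, gop a al (gop b be c) = gop (gop a al b) be c;
  gop0l : forall a al, gop zeroS al a = zeroS;
  gop0r : forall a al, gop a al zeroS = zeroS;
  gop0m : forall a b, gop a zeroG b = zeroS /\ gop b zeroG a = zeroS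
}.

Definition fuzzy (S : GammaHemiring) := carS S -> Rdefinitions.RbaseSymbolsImpl.R.

Definition fuzzy_subset (S : GammaHemiring) (f : fuzzy S) : Prop :=
  forall x, 0 <= f x <= 1.

Definition is_fuzzy_h_ideal (S : GammaHemiring) (mu : fuzzy S) : Prop :=
  fuzzy_subset mu /\
  (exists x, mu x <> 0) /\
  (forall x y, mu (addS x y) >= Order.min (mu x) (mu y)) /\
  (forall x y g, mu (gop x g y) >= mu x /\ mu (gop x g y) >= mu y) /\
  (forall x a b z, addS (addS x a) z = addS b z ->
     mu x >= Order.min (mu a) (mu b)).

Definition hprod (S : GammaHemiring) (sg th : fuzzy S) : fuzzy S := fun x =>
  let A := [set v : Rdefinitions.RbaseSymbolsImpl.R | exists (z a1 a2 b1 b2 : carS S) (g d : carG S),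
              addS (addS x (gop a1 g b1)) z = addS (gop a2 d b2) z /\
              v = Order.min (Order.min (sg a1) (sg a2)) (Order.min (th b1) (th b2))] in
  if pselect (A !=set0) then sup A else 0.

Definition fincl (S : GammaHemiring) (sg th : fuzzy S) : Prop :=
  forall x, sg x <= th x.

Definition is_prime_fuzzy_h_ideal (S : GammaHemiring) (mu : fuzzy S) : Prop :=
  is_fuzzy_h_ideal mu /\
  (exists x y, mu x <> mu y) /\
  (forall sg th : fuzzy S, is_fuzzy_h_ideal sg -> is_fuzzy_h_ideal th ->
     fincl (hprod sg th) mu -> fincl sg mu \/ fincl th mu).

Definition ext (S : GammaHemiring) (x : carS S) (mu : fuzzy S) : fuzzy S :=
  fun y => inf [set mu (gop (gop x (t.1.1) (t.1.2)) (t.2) y)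
                | t in [set: (carG S * carS S) * carG S]].

From mathcomp Require Import all_boot all_order all_algebra.
From mathcomp Require Import boolp classical_sets reals Rstruct.
Set Implicit Arguments. Unset Strict Implicit.
Import Order.TTheory GRing.Theory Num.Theory.
Local Open Scope classical_set_scope.
Local Open Scope ring_scope.

(** Every term [x eta s1 delta x alpha s gamma y] is of the form
    [(x eta s1) delta (x alpha s gamma y)], so [mu] of it is at least
    [mu (x alpha s gamma y)]: this gives one inequality.  For the other,
    fix [alpha, s, gamma] and let [c > 0] be the right-hand side; then
    [c <= mu ((x eta s1) delta (x alpha s gamma y))] for all [eta, s1, delta].
    For a prime fuzzy h-ideal the cut [{u | c <= mu u}] is then prime in the
    sense that [a Gamma S Gamma b] inside it forces [a] or [b] inside it, and
    both alternatives give [c <= mu (x alpha s gamma y)].  That primality is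
    obtained by testing the primality of [mu] against fuzzy h-ideals of the
    form [c] times the indicator of a crisp h-ideal. *)

Definition is_h_ideal (S : GammaHemiring) (P : carS S -> Prop) : Prop :=
  P (zeroS S) /\
  (forall u v, P u -> P v -> P (addS u v)) /\
  (forall u v g, P u \/ P v -> P (gop u g v)) /\
  (forall u a b z, addS (addS u a) z = addS b z -> P a -> P b -> P u).

Definition scaled_indicator (S : GammaHemiring) (c : Rdefinitions.R)
  (P : carS S -> Prop) : fuzzy S :=
  fun z => if pselect (P z) then c else 0.

Lemma h_ideal_full (S : GammaHemiring) : is_h_ideal (fun _ : carS S => True).
Proof. by split; [|split; [|split]]. Qed.

Section ScaledIndicator.
Variables (S : GammaHemiring) (c : Rdefinitions.R) (P : carS S -> Prop).

Lemma scaled_indicatorT z : P z -> scaled_indicator c P z = c.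
Proof. by rewrite /scaled_indicator; case: pselect. Qed.

Lemma scaled_indicatorF z : ~ P z -> scaled_indicator c P z = 0.
Proof. by rewrite /scaled_indicator; case: pselect. Qed.

Hypothesis c_gt0 : 0 < c.

Lemma scaled_indicator_ge0 z : 0 <= scaled_indicator c P z.
Proof. by rewrite /scaled_indicator; case: (pselect (P z)) => ? //; apply: ltW. Qed.

Lemma scaled_indicator_min_ge0 a b :
  ~ (P a /\ P b) ->
  0 >= Order.min (scaled_indicator c P a) (scaled_indicator c P b).
Proof.
move=> notab; rewrite ge_min.
have [pa|npa] := pselect (P a); last by rewrite (scaled_indicatorF npa) lexx.
have [pb|npb] := pselect (P b); last by rewrite (scaled_indicatorF npb) lexx orbT.
by case: notab.
Qed.

Lemma scaled_indicator_fuzzy_h_ideal :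
  c <= 1 -> is_h_ideal P -> is_fuzzy_h_ideal (scaled_indicator c P).
Proof.
move=> c_le1 [P0 [PD [PM PH]]].
have cut2 Q a b : (P a -> P b -> P Q) ->
    Order.min (scaled_indicator c P a) (scaled_indicator c P b)
    <= scaled_indicator c P Q.
  move=> PQ; have [[pa pb]|nab] := pselect (P a /\ P b).
    by rewrite !scaled_indicatorT ?minxx //; apply: PQ.
  exact: le_trans (scaled_indicator_min_ge0 nab) (scaled_indicator_ge0 _).
have cut1 Q a : (P a -> P Q) -> scaled_indicator c P a <= scaled_indicator c P Q.
  by move=> PQ; have := cut2 Q a a; rewrite minxx; apply => pa _; apply: PQ.
split; [|split; [|split; [|split]]].
- move=> z; rewrite scaled_indicator_ge0 /scaled_indicator.
  by case: (pselect (P z)) => ?; rewrite ?ler01.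
- by exists (zeroS S); rewrite scaled_indicatorT //; apply/eqP; rewrite gt_eqF.
- by move=> u v; apply: cut2; apply: PD.
- by move=> u v g; split; apply: cut1 => ?; apply: PM; [left|right].
- by move=> u a b z e; apply: cut2; apply: PH e.
Qed.

End ScaledIndicator.

Section FuzzyHIdeal.
Variables (S : GammaHemiring) (mu : fuzzy S).
Hypothesis mu_ideal : is_fuzzy_h_ideal mu.

Lemma fuzzy_h_ideal_ge0 z : 0 <= mu z.
Proof. by case: mu_ideal => mu01 _; case/andP: (mu01 z). Qed.

Lemma fuzzy_h_ideal_le1 z : mu z <= 1.
Proof. by case: mu_ideal => mu01 _; case/andP: (mu01 z). Qed.

Lemma fuzzy_h_ideal_gopl u g v : mu u <= mu (gop u g v).
Proof. by case: mu_ideal => _ [_ [_ [muM _]]]; case: (muM u v g). Qed.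

Lemma fuzzy_h_ideal_gopr u g v : mu v <= mu (gop u g v).
Proof. by case: mu_ideal => _ [_ [_ [muM _]]]; case: (muM u v g). Qed.

Lemma fuzzy_h_ideal_le0 z : mu z <= mu (zeroS S).
Proof. by rewrite -(@gop0l S z (zeroG S)) fuzzy_h_ideal_gopr. Qed.

(* The crisp h-ideals used to test primality are all of this shape: common
   preimages of the cut [{u | c <= mu u}] under a family of additive maps. *)
Lemma h_ideal_cut_preimage (c : Rdefinitions.R) (I : Type)
    (F : I -> carS S -> carS S) :
  c <= mu (zeroS S) ->
  (forall i, F i (zeroS S) = zeroS S) ->
  (forall i u v, F i (addS u v) = addS (F i u) (F i v)) ->
  (forall u v g, (forall i, c <= mu (F i u)) \/ (forall i, c <= mu (F i v)) ->
     forall i, c <= mu (F i (gop u g v))) ->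
  is_h_ideal (fun u => forall i, c <= mu (F i u)).
Proof.
case: mu_ideal => _ [_ [muD [_ muH]]] c_le_mu0 F0 FD FM.
split; [|split; [|split]] => //.
- by move=> i; rewrite F0.
- move=> u v cu cv i; rewrite FD; apply: le_trans (muD _ _).
  by rewrite le_min cu cv.
- move=> u a b z e ca cb i.
  have Fe : addS (addS (F i u) (F i a)) (F i z) = addS (F i b) (F i z).
    by rewrite -!FD e.
  by apply: le_trans (muH _ _ _ _ Fe); rewrite le_min ca cb.
Qed.

Lemma ext_ge0 z y : 0 <= ext z mu y.
Proof.
apply: lb_le_inf.
  by exists (mu (gop (gop z (zeroG S) (zeroS S)) (zeroG S) y)),
    ((zeroG S, zeroS S), zeroG S).
by move=> _ [t _ <-]; apply: fuzzy_h_ideal_ge0.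
Qed.

Lemma ext_le z y a s g : ext z mu y <= mu (gop (gop z a s) g y).
Proof.
apply: ge_inf; last by exists ((a, s), g).
by exists 0 => _ [t _ <-]; apply: fuzzy_h_ideal_ge0.
Qed.

End FuzzyHIdeal.

Section PrimeFuzzyHIdeal.
Variables (S : GammaHemiring) (mu : fuzzy S).
Hypothesis mu_prime : is_prime_fuzzy_h_ideal mu.

Let mu_ideal : is_fuzzy_h_ideal mu. Proof. by case: mu_prime. Qed.

Lemma prime_cut_h_ideals (c : Rdefinitions.R) (P1 P2 : carS S -> Prop) :
  0 < c -> is_h_ideal P1 -> is_h_ideal P2 ->
  (forall u v g, P1 u -> P2 v -> c <= mu (gop u g v)) ->
  (forall u, P1 u -> c <= mu u) \/ (forall v, P2 v -> c <= mu v).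
Proof.
move=> c_gt0 hP1 hP2 P12.
have c_le1 : c <= 1.
  apply: le_trans (fuzzy_h_ideal_le1 mu_ideal (gop (zeroS S) (zeroG S) (zeroS S))).
  by apply: P12; [case: hP1 | case: hP2].
have [_ [_ mu_prime_def]] := mu_prime.
have prod_le : fincl (hprod (scaled_indicator c P1) (scaled_indicator c P2)) mu.
  move=> z; rewrite /hprod; case: pselect => [ne|?]; last first.
    exact: fuzzy_h_ideal_ge0.
  apply: ge_sup => // _ [w [a1 [a2 [b1 [b2 [g [d [e ->]]]]]]]].
  have [[pa1 pa2]|na] := pselect (P1 a1 /\ P1 a2); last first.
    apply: le_trans (fuzzy_h_ideal_ge0 mu_ideal z).
    by rewrite ge_min (scaled_indicator_min_ge0 c na).
  have [[pb1 pb2]|nb] := pselect (P2 b1 /\ P2 b2); last first.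
    apply: le_trans (fuzzy_h_ideal_ge0 mu_ideal z).
    by rewrite ge_min (scaled_indicator_min_ge0 c nb) orbT.
  rewrite !scaled_indicatorT // !minxx.
  have [_ [_ [_ [_ muH]]]] := mu_ideal.
  by apply: le_trans (muH _ _ _ _ e); rewrite le_min !P12.
have [inc1|inc2] := mu_prime_def _ _
  (scaled_indicator_fuzzy_h_ideal c_gt0 c_le1 hP1)
  (scaled_indicator_fuzzy_h_ideal c_gt0 c_le1 hP2) prod_le.
- by left => u pu; rewrite -(scaled_indicatorT c pu).
- by right => v pv; rewrite -(scaled_indicatorT c pv).
Qed.

Lemma prime_cut_absorb (c : Rdefinitions.R) b :
  0 < c -> (forall s d, c <= mu (gop s d b)) -> c <= mu b.
Proof.
move=> c_gt0 cb.
pose F (i : carS S * carG S) v := gop i.1 i.2 v.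
have hP : is_h_ideal (fun v => forall i, c <= mu (F i v)).
  apply: h_ideal_cut_preimage => //.
  - exact: le_trans (cb (zeroS S) (zeroG S)) (fuzzy_h_ideal_le0 mu_ideal _).
  - by move=> i; rewrite /F gop0r.
  - by move=> i u v; rewrite /F gopDr.
  move=> u v g [cu|cv] [s d]; rewrite /F /= gopA.
  + exact: le_trans (cu (s, d)) (fuzzy_h_ideal_gopl mu_ideal _ _ _).
  + exact: (cv (gop s d u, g)).
have [all_c|] := prime_cut_h_ideals c_gt0 (@h_ideal_full S) hP
  (fun u v g _ cv => cv (u, g)); first exact: all_c.
by apply => -[s d]; apply: cb.
Qed.

(* [P1] is the largest set [A] with [A Gamma S Gamma b] in the cut, and [P2]
   the set of [v] with [P1 Gamma v] in the cut; [gop s d b] lies in [P2]. *)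
Lemma prime_cut_sandwich (c : Rdefinitions.R) a b :
  0 < c -> (forall e s d, c <= mu (gop (gop a e s) d b)) ->
  c <= mu a \/ c <= mu b.
Proof.
move=> c_gt0 cab.
have c_le_mu0 : c <= mu (zeroS S).
  exact: le_trans (cab (zeroG S) (zeroS S) (zeroG S)) (fuzzy_h_ideal_le0 mu_ideal _).
pose F1 (i : (carG S * carS S) * carG S) u := gop (gop u i.1.1 i.1.2) i.2 b.
pose P1 u := forall i, c <= mu (F1 i u).
have hP1 : is_h_ideal P1.
  apply: h_ideal_cut_preimage => //.
  - by move=> i; rewrite /F1 !gop0l.
  - by move=> i u v; rewrite /F1 !gopDl.
  move=> u v g [cu|cv] i; rewrite /F1 -[gop (gop u g v) _ _]gopA.
  + exact: (cu ((g, gop v i.1.1 i.1.2), i.2)).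
  + by rewrite -gopA; apply: le_trans (cv i) (fuzzy_h_ideal_gopr mu_ideal _ _ _).
pose F2 (i : {p : carS S * carG S | P1 p.1}) v := gop (sval i).1 (sval i).2 v.
pose P2 v := forall i, c <= mu (F2 i v).
have hP2 : is_h_ideal P2.
  apply: h_ideal_cut_preimage => //.
  - by move=> i; rewrite /F2 gop0r.
  - by move=> i u v; rewrite /F2 gopDr.
  move=> u v g [cu|cv] [[w h] pw]; rewrite /F2 /= gopA.
  + exact: le_trans (cu (exist _ (w, h) pw)) (fuzzy_h_ideal_gopl mu_ideal _ _ _).
  + have [_ [_ [P1M _]]] := hP1.
    exact: (cv (exist _ (gop w h u, g) (P1M _ _ _ (or_introl pw)))).
have [inc1|inc2] := prime_cut_h_ideals c_gt0 hP1 hP2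
  (fun u v g pu pv => pv (exist _ (u, g) pu)).
  by left; apply: inc1 => -[[e s] d]; apply: cab.
right; apply: prime_cut_absorb => // s d.
by apply: inc2 => -[[w g] pw]; rewrite /F2 /= gopA; apply: (pw ((g, s), d)).
Qed.

End PrimeFuzzyHIdeal.

Lemma gop_sandwichA (S : GammaHemiring) (x y s1 s : carS S) e d a g :
  gop (gop (gop (gop x e s1) d x) a s) g y =
  gop (gop x e s1) d (gop (gop x a s) g y).
Proof. by rewrite -[gop (gop (gop _ e s1) d x) a s]gopA -gopA. Qed.

Theorem proposition3p18 (S : GammaHemiring) (mu : fuzzy S) (x : carS S) :
  is_prime_fuzzy_h_ideal mu ->
  forall y : carS S,
    ext x mu y =
    inf [set ext (gop (gop x (t.1.1) (t.1.2)) (t.2) x) mu y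
         | t in [set: (carG S * carS S) * carG S]].
Proof.
move=> mu_prime y; have mu_ideal : is_fuzzy_h_ideal mu by case: mu_prime.
set c := inf _; pose t0 := ((zeroG S, zeroS S), zeroG S).
apply: le_anti; apply/andP; split.
- apply: lb_le_inf => [|_ [[[e s1] d] _ <-]]; first by eexists; exists t0.
  apply: lb_le_inf => [|_ [[[a s] g] _ <-] /=].
    by eexists; exists t0.
  rewrite gop_sandwichA.
  exact: le_trans (ext_le mu_ideal _ _ a s g) (fuzzy_h_ideal_gopr mu_ideal _ _ _).
- apply: lb_le_inf => [|_ [[[a s] g] _ <-] /=]; first by eexists; exists t0.
  have [c_le0|c_gt0] := leP c 0.
    exact: le_trans c_le0 (fuzzy_h_ideal_ge0 mu_ideal _).
  have [c_x|//] : c <= mu x \/ c <= mu (gop (gop x a s) g y).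
    apply: prime_cut_sandwich => // e s1 d; rewrite -gop_sandwichA.
    apply: le_trans (ext_le mu_ideal _ _ a s g).
    apply: ge_inf; last by exists ((e, s1), d).
    by exists 0 => _ [t _ <-]; apply: ext_ge0.
  apply: le_trans c_x (le_trans _ (fuzzy_h_ideal_gopl mu_ideal _ g y)).
  exact: fuzzy_h_ideal_gopl.
Qed.
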